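(* Let $n\ge2$, let $D$ and $D'$ be proper subdomains of $\mathbb{R}^n$, and let $f:\overline{\mathbb{R}}^n\to\overline{\mathbb{R}}^n$ be a Möbius transformation with $f(D)=D'$. Then for all $x,y\in D$, $$\tfrac12\tilde\tau_D(x,y)\le\tilde\tau_{D'}(f(x),f(y))\le2\tilde\tau_D(x,y).$$
   Context: $\overline{\mathbb{R}}^n=\mathbb{R}^n\cup\{\infty\}$; a Möbius transformation is a finite composition of reflections in spheres and hyperplanes. For a proper subdomain $D\subsetneq\mathbb{R}^n$ and $x,y\in D$, $\tilde\tau_D(x,y)=\log\big(1+\sup_{p\in\partial D}\frac{|x-y|}{\sqrt{|x-p||y-p|}}\big)$ (the scale invariant Cassinian metric), where $\partial D$ is the boundary of $D$ in $\mathbb{R}^n$. *)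

From Stdlib Require Import Reals ClassicalEpsilon.
From mathcomp Require Import ssreflect ssrfun ssrbool eqtype ssrnat fintype bigop.
Set Implicit Arguments.
Unset Strict Implicit.
Unset Printing Implicit Defensive.
Local Open Scope R_scope.

Definition pt (n : nat) := 'I_n -> R.
(* Points of the one-point compactification: None = infinity *)
Definition ext (n : nat) := option (pt n).

Definition vadd n (x y : pt n) : pt n := fun i => x i + y i.
Definition vsub n (x y : pt n) : pt n := fun i => x i - y i.
Definition vscale n (c : R) (x : pt n) : pt n := fun i => c * x i.
Definition dot n (x y : pt n) : R := \big[Rplus/0]_(i < n) (x i * y i).
Definition norm n (x : pt n) : R := sqrt (dot x x).
Definition dist n (x y : pt n) : R := norm (vsub x y).

Definition sphere_refl n (a : pt n) (r : R) (z : ext n) : ext n :=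
  match z with
  | None => Some a
  | Some x =>
      match excluded_middle_informative (x = a) with
      | left _ => None
      | right _ => Some (vadd a (vscale (r ^ 2 / (dist x a) ^ 2) (vsub x a)))
      end
  end.

Definition plane_refl n (u : pt n) (t : R) (z : ext n) : ext n :=
  match z with
  | None => None
  | Some x => Some (vsub x (vscale (2 * (dot x u - t) / (norm u) ^ 2) u))
  end.

Inductive is_reflection n : (ext n -> ext n) -> Prop :=
  | refl_sphere (a : pt n) (r : R) : 0 < r -> is_reflection (sphere_refl a r)
  | refl_plane (u : pt n) (t : R) : u <> (fun _ => 0) -> is_reflection (plane_refl u t).

Inductive is_mobius n : (ext n -> ext n) -> Prop :=
  | mob_id : is_mobius (fun z => z)
  | mob_comp (f g : ext n -> ext n) :
      is_mobius f -> is_reflection g -> is_mobius (fun z => g (f z)).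

Definition ball n (c : pt n) (e : R) (x : pt n) : Prop := dist x c < e.
Definition is_open n (U : pt n -> Prop) : Prop :=
  forall x, U x -> exists e, 0 < e /\ forall y, ball x e y -> U y.
Definition is_connected n (D : pt n -> Prop) : Prop :=
  ~ exists U V : pt n -> Prop,
      is_open U /\ is_open V /\
      (exists x, D x /\ U x) /\ (exists x, D x /\ V x) /\
      (forall x, D x -> U x \/ V x) /\ (forall x, D x -> U x -> V x -> False).
Definition is_domain n (D : pt n -> Prop) : Prop :=
  (exists x, D x) /\ is_open D /\ is_connected D.
Definition is_proper n (D : pt n -> Prop) : Prop := exists x, ~ D x.
Definition boundary n (D : pt n -> Prop) (p : pt n) : Prop :=
  (forall e, 0 < e -> exists x, ball p e x /\ D x) /\
  (forall e, 0 < e -> exists x, ball p e x /\ ~ D x).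

(* Supremum of a set of reals (0 if empty or unbounded above). *)
Definition Rsup (E : R -> Prop) : R :=
  match excluded_middle_informative (bound E /\ exists x, E x) with
  | left H => proj1_sig (completeness E (proj1 H) (proj2 H))
  | right _ => 0
  end.

Definition tau_tilde n (D : pt n -> Prop) (x y : pt n) : R :=
  ln (1 + Rsup (fun s => exists p, boundary D p /\
                   s = dist x y / sqrt (dist x p * dist y p))).

From Stdlib Require Import Reals Lra Psatz.
From Stdlib Require Import ClassicalEpsilon FunctionalExtensionality PropExtensionality.
From HB Require Import structures.
From mathcomp Require Import ssreflect ssrfun ssrbool eqtype ssrnat fintype bigop.
Set Implicit Arguments.
Unset Strict Implicit.
Local Open Scope R_scope.

(** Every Möbius map is, away from infinity, either a similarity or
   inversion-like: it sends a pole [a] to infinity and infinity to a point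
   [b], with [|f z - b| = l / |z - a|] and
   [|f z - f w| = l |z - w| / (|z - a| |w - a|)]; this normal form is stable
   under composition with reflections.  Similarities preserve the Cassinian
   ratios [|x - y| / sqrt (|x - p| |y - p|)].  For an inversion-like map, the
   boundary point [b] of [f(D)] corresponds to the pole [a], which lies outside
   [D], and any other boundary point [q] is [f p] for a boundary point [p] of
   [D], the ratio at [q] becoming
   [|x - y| |p - a| / sqrt (|x - a| |y - a| |x - p| |y - p|)].  Every point
   outside [D] gives a ratio at most the supremum [s] over the boundary (walk
   from [x] towards it until [D] is left), and elementary estimates bound the
   ratio at [q] by [2 s + s^2].  Hence [1 + s' <= (1 + s)^2], which is the
   upper inequality; the lower one is the upper one for [f^-1]. *)

HB.instance Definition _ := Monoid.isComLaw.Build R 0 Rplus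
  (fun x y z => esym (Rplus_assoc x y z)) Rplus_comm Rplus_0_l.

Lemma sumR_lin n (F G : 'I_n -> R) a b :
  \big[Rplus/0]_(i < n) (a * F i + b * G i) =
  a * \big[Rplus/0]_(i < n) F i + b * \big[Rplus/0]_(i < n) G i.
Proof. by elim/big_rec3: _ => [|i y1 y2 y3 _ ->]; ring. Qed.

Lemma sumR_ge0 n (F : 'I_n -> R) :
  (forall i, 0 <= F i) -> 0 <= \big[Rplus/0]_(i < n) F i.
Proof. by move=> F0; elim/big_ind: _ => //; [lra | move=> *; lra]. Qed.

Lemma sumR_ge_term n (F : 'I_n -> R) j :
  (forall i, 0 <= F i) -> F j <= \big[Rplus/0]_(i < n) F i.
Proof.
move=> F0; rewrite (bigD1 j) //= -{1}(Rplus_0_r (F j)); apply: Rplus_le_compat_l.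
by elim/big_ind: _ => [|*|i _]; [lra | lra | exact: F0].
Qed.

Section Euclid.
Variable n : nat.
Implicit Types x y z u v c p q : pt n.

Lemma dotC x y : dot x y = dot y x.
Proof. by apply: eq_bigr => i _; ring. Qed.

Lemma dot_lin x y z a b :
  dot (fun i => a * x i + b * y i) z = a * dot x z + b * dot y z.
Proof. by rewrite /dot -sumR_lin; apply: eq_bigr => i _; ring. Qed.

Lemma dot_vsubl x y z : dot (vsub x y) z = dot x z - dot y z.
Proof.
have -> : vsub x y = (fun i => 1 * x i + (-1) * y i).
  by apply: functional_extensionality => i; rewrite /vsub; ring.
rewrite dot_lin; ring.
Qed.

Lemma dot_vaddl x y z : dot (vadd x y) z = dot x z + dot y z.
Proof.
have -> : vadd x y = (fun i => 1 * x i + 1 * y i).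
  by apply: functional_extensionality => i; rewrite /vadd; ring.
rewrite dot_lin; ring.
Qed.

Lemma dot_vscalel a x z : dot (vscale a x) z = a * dot x z.
Proof.
have -> : vscale a x = (fun i => a * x i + 0 * x i).
  by apply: functional_extensionality => i; rewrite /vscale; ring.
rewrite dot_lin; ring.
Qed.

Lemma dot_vsubr x y z : dot z (vsub x y) = dot z x - dot z y.
Proof. by rewrite dotC dot_vsubl (dotC x) (dotC y). Qed.

Lemma dot_vaddr x y z : dot z (vadd x y) = dot z x + dot z y.
Proof. by rewrite dotC dot_vaddl (dotC x) (dotC y). Qed.

Lemma dot_vscaler a x z : dot z (vscale a x) = a * dot z x.
Proof. by rewrite dotC dot_vscalel (dotC x). Qed.

Lemma dot_self_ge0 x : 0 <= dot x x.
Proof. by apply: sumR_ge0 => i; nra. Qed.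

Lemma dot_self_eq0 x : dot x x = 0 -> x = (fun _ => 0).
Proof.
move=> x0; apply: functional_extensionality => i.
have := @sumR_ge_term _ (fun i => x i * x i) i (fun j => ltac:(nra)).
rewrite -/(dot x x) x0; nra.
Qed.

Lemma norm_sq x : norm x ^ 2 = dot x x.
Proof. by rewrite /norm /= Rmult_1_r sqrt_sqrt //; apply: dot_self_ge0. Qed.

Lemma norm_ge0 x : 0 <= norm x.
Proof. exact: sqrt_pos. Qed.

Lemma norm_eq0 x : norm x = 0 -> x = (fun _ => 0).
Proof. by move=> x0; apply: dot_self_eq0; rewrite -norm_sq x0; ring. Qed.

Lemma norm_vscale a x : norm (vscale a x) = Rabs a * norm x.
Proof.
rewrite /norm dot_vscalel dot_vscaler -Rmult_assoc -sqrt_Rsqr_abs -sqrt_mult_alt //.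
exact: Rle_0_sqr.
Qed.

Lemma Cauchy_Schwarz x y : dot x y ^ 2 <= dot x x * dot y y.
Proof.
have xx0 := dot_self_ge0 x.
case: (dot_self_ge0 y) => [yy0|/esym/dot_self_eq0 y0]; last first.
  have -> : dot x y = 0 by rewrite y0 /dot; elim/big_ind: _ => //= [a b -> ->|i _]; ring.
  have ? := dot_self_ge0 y; nra.
set k := dot x y / dot y y.
have := dot_self_ge0 (vsub x (vscale k y)).
rewrite !dot_vsubl !dot_vsubr !dot_vscalel !dot_vscaler (dotC y x).
have -> : dot x x - k * dot x y - (k * dot x y - k * (k * dot y y))
    = (dot x x * dot y y - dot x y ^ 2) / dot y y by rewrite /k; field; lra.
move=> h; have := Rmult_le_compat_r _ _ _ (Rlt_le _ _ yy0) h.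
have -> : (dot x x * dot y y - dot x y ^ 2) / dot y y * dot y y
    = dot x x * dot y y - dot x y ^ 2 by field; lra.
move=> ?; lra.
Qed.

Lemma dot_le_norm x y : dot x y <= norm x * norm y.
Proof.
have := Cauchy_Schwarz x y; rewrite -!norm_sq => ?.
have ? : 0 <= norm x * norm y by apply: Rmult_le_pos; apply: norm_ge0.
nra.
Qed.

Lemma norm_triangle x y : norm (vadd x y) <= norm x + norm y.
Proof.
have ? := dot_le_norm x y.
have ? := norm_ge0 x; have ? := norm_ge0 y; have ? := norm_ge0 (vadd x y).
have ? : norm (vadd x y) ^ 2 = norm x ^ 2 + 2 * dot x y + norm y ^ 2.
  by rewrite !norm_sq dot_vaddl !dot_vaddr (dotC y x); ring.
nra.
Qed.

Lemma dist_sq x y : dist x y ^ 2 = dot (vsub x y) (vsub x y).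
Proof. exact: norm_sq. Qed.

Lemma dist_ge0 x y : 0 <= dist x y.
Proof. exact: norm_ge0. Qed.

Lemma dist_sym x y : dist x y = dist y x.
Proof.
rewrite /dist.
have -> : vsub x y = vscale (-1) (vsub y x).
  by apply: functional_extensionality => i; rewrite /vsub /vscale; ring.
by rewrite norm_vscale Rabs_Ropp Rabs_R1 Rmult_1_l.
Qed.

Lemma dist_xx x : dist x x = 0.
Proof.
rewrite /dist.
have -> : vsub x x = vscale 0 x.
  by apply: functional_extensionality => i; rewrite /vsub /vscale; ring.
by rewrite norm_vscale Rabs_R0 Rmult_0_l.
Qed.

Lemma dist_eq0 x y : dist x y = 0 -> x = y.
Proof.
move=> /norm_eq0 xy; apply: functional_extensionality => i.
have := f_equal (fun f => f i) xy; rewrite /vsub /=; lra.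
Qed.

Lemma dist_pos x y : x <> y -> 0 < dist x y.
Proof. by move=> xy; case: (dist_ge0 x y) => // /esym/dist_eq0. Qed.

Lemma dist_triangle x y z : dist x z <= dist x y + dist y z.
Proof.
rewrite /dist.
have -> : vsub x z = vadd (vsub x y) (vsub y z).
  by apply: functional_extensionality => i; rewrite /vsub /vadd; ring.
exact: norm_triangle.
Qed.

Lemma dot_vsub_self x y : dot (vsub x y) (vsub x y) = dot x x - 2 * dot x y + dot y y.
Proof. by rewrite dot_vsubl !dot_vsubr (dotC y x); ring. Qed.

Lemma dist_polarization c u v :
  dist u v ^ 2 = dist u c ^ 2 - 2 * dot (vsub u c) (vsub v c) + dist v c ^ 2.
Proof.
rewrite !dist_sq -dot_vsub_self; congr dot;
  by apply: functional_extensionality => i; rewrite /vsub; ring.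
Qed.

Lemma nonneg_sq_inj a b : 0 <= a -> 0 <= b -> a ^ 2 = b ^ 2 -> a = b.
Proof. nra. Qed.

Definition homothety c k u : pt n := vadd c (vscale k (vsub u c)).

Lemma dist_homothety_center c k u : dist (homothety c k u) c = Rabs k * dist u c.
Proof.
rewrite /dist -norm_vscale; congr norm.
by apply: functional_extensionality => i; rewrite /homothety /vsub /vadd /vscale; ring.
Qed.

Lemma dist_homothety c k1 k2 u v :
  dist (homothety c k1 u) (homothety c k2 v) ^ 2 =
  k1 ^ 2 * dist u c ^ 2 - 2 * k1 * k2 * dot (vsub u c) (vsub v c) + k2 ^ 2 * dist v c ^ 2.
Proof.
rewrite !dist_sq.
have -> : vsub (homothety c k1 u) (homothety c k2 v)
    = vsub (vscale k1 (vsub u c)) (vscale k2 (vsub v c)).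
  by apply: functional_extensionality => i; rewrite /homothety /vsub /vadd /vscale; ring.
by rewrite dot_vsub_self !dot_vscalel !dot_vscaler; ring.
Qed.

Definition inversion c r u := homothety c (r ^ 2 / dist u c ^ 2) u.

Lemma dist_inversion c r u v : u <> c -> v <> c ->
  dist (inversion c r u) (inversion c r v) = r ^ 2 * dist u v / (dist u c * dist v c).
Proof.
move=> uc vc; have du := dist_pos uc; have dv := dist_pos vc.
apply: nonneg_sq_inj; first exact: dist_ge0.
  apply: Rmult_le_pos; last by apply: Rlt_le; apply: Rinv_0_lt_compat; nra.
  by apply: Rmult_le_pos; [nra | exact: dist_ge0].
have e : dot (vsub u c) (vsub v c) = (dist u c ^ 2 + dist v c ^ 2 - dist u v ^ 2) / 2.
  by rewrite (dist_polarization c u v); field.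
by rewrite dist_homothety e; field; lra.
Qed.

Lemma dist_inversion_center c r u : u <> c ->
  dist (inversion c r u) c = r ^ 2 / dist u c.
Proof.
move=> uc; have du := dist_pos uc.
rewrite dist_homothety_center Rabs_pos_eq; first by field; lra.
by apply: Rmult_le_pos; [nra | apply: Rlt_le; apply: Rinv_0_lt_compat; nra].
Qed.

Lemma inversion_neq_center c r u : 0 < r -> u <> c -> inversion c r u <> c.
Proof.
move=> r0 uc e; have du := dist_pos uc.
have := dist_inversion_center r uc; rewrite e dist_xx.
have : 0 < r ^ 2 / dist u c by apply: Rdiv_lt_0_compat; nra.
lra.
Qed.

Lemma inversionK c r u : 0 < r -> u <> c -> inversion c r (inversion c r u) = u.
Proof.
move=> r0 uc; have du := dist_pos uc.
rewrite {1}/inversion dist_inversion_center //.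
apply: functional_extensionality => i.
rewrite /inversion /homothety /vsub /vadd /vscale; field; lra.
Qed.

Definition segment_point x q s : pt n := vadd x (vscale s (vsub q x)).

Lemma segment_point0 x q : segment_point x q 0 = x.
Proof.
by apply: functional_extensionality => i; rewrite /segment_point /vsub /vadd /vscale; ring.
Qed.

Lemma segment_point1 x q : segment_point x q 1 = q.
Proof.
by apply: functional_extensionality => i; rewrite /segment_point /vsub /vadd /vscale; ring.
Qed.

Lemma dist_segment_point x q s s' :
  dist (segment_point x q s) (segment_point x q s') = Rabs (s - s') * dist q x.
Proof.
rewrite /dist -norm_vscale; congr norm.
by apply: functional_extensionality => i; rewrite /segment_point /vsub /vadd /vscale; ring.
Qed.

Lemma dist_segment_point_lt x q s s' e : q <> x -> 0 < e ->
  Rabs (s - s') <= e / (2 * dist q x) ->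
  dist (segment_point x q s) (segment_point x q s') < e.
Proof.
move=> qx e0 ss'; have := dist_pos qx.
rewrite dist_segment_point => qx0.
apply: Rle_lt_trans (Rmult_le_compat_r _ _ _ (Rlt_le _ _ qx0) ss') _.
have -> : e / (2 * dist q x) * dist q x = e / 2 by field; lra.
lra.
Qed.

Lemma dist_segment_point_le x q y s : 0 <= s <= 1 ->
  dist y (segment_point x q s) <= (1 - s) * dist y x + s * dist y q.
Proof.
move=> s01; rewrite /dist.
have -> : vsub y (segment_point x q s)
    = vadd (vscale (1 - s) (vsub y x)) (vscale s (vsub y q)).
  by apply: functional_extensionality => i; rewrite /segment_point /vsub /vadd /vscale; ring.
apply: Rle_trans (norm_triangle _ _) _.
rewrite !norm_vscale !Rabs_pos_eq; lra.
Qed.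

End Euclid.

Section Reflections.
Variable n : nat.
Implicit Types x y z u v c : pt n.

Lemma sphere_refl_Some c r x : x <> c ->
  sphere_refl c r (Some x) = Some (inversion c r x).
Proof. by move=> xc; rewrite /sphere_refl; case: excluded_middle_informative. Qed.

Lemma sphere_refl_center c r : sphere_refl c r (Some c) = None.
Proof. by rewrite /sphere_refl; case: excluded_middle_informative. Qed.

Lemma sphere_refl_eq_Some c r w z : sphere_refl c r w = Some z ->
  (w = None /\ z = c) \/ exists u, w = Some u /\ u <> c /\ z = inversion c r u.
Proof.
case: w => [u|[<-]]; last by left.
case: (excluded_middle_informative (u = c)) => [->|uc]; first by rewrite sphere_refl_center.
by rewrite sphere_refl_Some // => -[<-]; right; exists u.
Qed.

Lemma sphere_reflK c r (z : ext n) : 0 < r -> sphere_refl c r (sphere_refl c r z) = z.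
Proof.
move=> r0; case: z => [x|]; last by rewrite -[sphere_refl c r None]/(Some c) sphere_refl_center.
case: (excluded_middle_informative (x = c)) => [->|xc]; first by rewrite sphere_refl_center.
by rewrite !sphere_refl_Some ?inversionK //; apply: inversion_neq_center.
Qed.

Definition plane_map u t x : pt n :=
  vsub x (vscale (2 * (dot x u - t) / norm u ^ 2) u).

Lemma norm_neq0 u : u <> (fun _ => 0) -> norm u <> 0.
Proof. by move=> u0 /norm_eq0. Qed.

Lemma plane_mapK u t x : u <> (fun _ => 0) -> plane_map u t (plane_map u t x) = x.
Proof.
move=> /norm_neq0 u0.
have e : dot (plane_map u t x) u = 2 * t - dot x u.
  by rewrite /plane_map dot_vsubl dot_vscalel -norm_sq; field.
rewrite {1}/plane_map e; apply: functional_extensionality => i.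
by rewrite /plane_map /vsub /vscale; field.
Qed.

Lemma dist_plane_map u t x y : u <> (fun _ => 0) ->
  dist (plane_map u t x) (plane_map u t y) = dist x y.
Proof.
move=> /norm_neq0 u0.
apply: nonneg_sq_inj; try exact: dist_ge0.
rewrite !dist_sq.
set k := 2 * (dot x u - t) / norm u ^ 2 - 2 * (dot y u - t) / norm u ^ 2.
have -> : vsub (plane_map u t x) (plane_map u t y) = vsub (vsub x y) (vscale k u).
  by apply: functional_extensionality => i; rewrite /plane_map /vsub /vscale /k; ring.
rewrite dot_vsub_self dot_vscalel !dot_vscaler -(norm_sq u) (dot_vsubl x y u) /k.
by field.
Qed.

Lemma plane_reflK u t (z : ext n) : u <> (fun _ => 0) ->
  plane_refl u t (plane_refl u t z) = z.
Proof. by move=> u0; case: z => [x|] //; exact: (congr1 Some (plane_mapK t x u0)). Qed.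

End Reflections.

Section MobiusNormalForm.
Variable n : nat.
Implicit Types f g : ext n -> ext n.

Definition inverse_maps f g := forall z, g (f z) = z /\ f (g z) = z.

Definition is_similarity f l :=
  f None = None /\ 0 < l /\
  forall z w z' w', f (Some z) = Some z' -> f (Some w) = Some w' ->
    dist z' w' = l * dist z w.

Definition is_inversive f a b l :=
  0 < l /\ f (Some a) = None /\ f None = Some b /\
  (forall z z', f (Some z) = Some z' -> dist z' b = l / dist z a) /\
  (forall z w z' w', f (Some z) = Some z' -> f (Some w) = Some w' ->
     dist z' w' = l * dist z w / (dist z a * dist w a)).

Definition mobius_type f :=
  (exists l, is_similarity f l) \/ (exists a b l, is_inversive f a b l).

Lemma inverse_maps_sym f g : inverse_maps f g -> inverse_maps g f.
Proof. by move=> fg z; case: (fg z). Qed.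

Lemma inverse_maps_comp f g h : inverse_maps f g -> (forall z, h (h z) = z) ->
  inverse_maps (fun z => h (f z)) (fun z => g (h z)).
Proof.
move=> fg hK z; split; first by rewrite hK; case: (fg z).
by case: (fg (h z)) => _ ->.
Qed.

Lemma inverse_maps_inj f g z w : inverse_maps f g -> f z = f w -> z = w.
Proof. by move=> fg e; case: (fg z) => <- _; case: (fg w) => <- _; rewrite e. Qed.

Lemma inverse_maps_Some f g x y : inverse_maps f g ->
  f (Some x) = Some y -> g (Some y) = Some x.
Proof. by move=> fg <-; case: (fg (Some x)). Qed.

Lemma dist_pole_pos f a z z' : f (Some a) = None -> f (Some z) = Some z' -> 0 < dist z a.
Proof. by move=> fa fz; apply: dist_pos => za; rewrite za fa in fz. Qed.

Lemma mobius_type_plane_refl f u t : u <> (fun _ => 0) ->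
  mobius_type f -> mobius_type (fun z => plane_refl u t (f z)).
Proof.
move=> u0 [[l [f0 [l0 Hf]]]|[a [b [l [l0 [fa [fb [Hb Hf]]]]]]]].
- left; exists l; split; first by rewrite f0.
  split=> // z w z'' w''.
  case ez: (f (Some z)) => [z'|] //; case ew: (f (Some w)) => [w'|] //= [<-] [<-].
  by rewrite dist_plane_map //; apply: Hf.
- right; exists a, (plane_map u t b), l; do 3! (split; first by rewrite ?fa ?fb).
  split=> [z z''|z w z'' w'']; case ez: (f (Some z)) => [z'|] //.
    by move=> /= [<-]; rewrite dist_plane_map //; apply: Hb.
  case ew: (f (Some w)) => [w'|] //= [<-] [<-].
  by rewrite dist_plane_map //; apply: Hf.
Qed.

Section SphereReflection.
Variables (f g : ext n -> ext n) (c : pt n) (r : R).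
Hypotheses (r0 : 0 < r) (fg : inverse_maps f g).
Let F z := sphere_refl c r (f z).

Ltac clear_denoms := field; repeat split; (lra || (rewrite dist_sym; lra)).

Lemma similarity_sphere_refl l z0 : is_similarity f l -> f (Some z0) = Some c ->
  is_inversive F z0 c (r ^ 2 / l).
Proof.
move=> [f0 [l0 Hf]] fz0.
have image z z'' : F (Some z) = Some z'' ->
    exists z', f (Some z) = Some z' /\ z' <> c /\ z'' = inversion c r z'.
  case/sphere_refl_eq_Some => [[fz _]|//].
  by rewrite -f0 in fz; have := inverse_maps_inj fg fz.
have dist_c z z' : f (Some z) = Some z' -> dist z' c = l * dist z z0.
  by move=> fz; apply: Hf fz fz0.
have pos z z' : f (Some z) = Some z' -> z' <> c -> 0 < dist z z0.
  move=> fz /dist_pos; rewrite (dist_c _ _ fz) => ?; nra.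
split; first by apply: Rdiv_lt_0_compat => //; nra.
rewrite /F fz0 sphere_refl_center f0; do 2! split => //.
split=> [z _ /image [z' [fz [z'c ->]]]|z w _ _ /image [z' [fz [z'c ->]]] /image [w' [fw [w'c ->]]]].
  have ? := pos _ _ fz z'c.
  by rewrite dist_inversion_center // (dist_c _ _ fz); clear_denoms.
have ? := pos _ _ fz z'c; have ? := pos _ _ fw w'c.
rewrite dist_inversion // (Hf _ _ _ _ fz fw) (dist_c _ _ fz) (dist_c _ _ fw).
clear_denoms.
Qed.

Lemma comp_sphere_refl_eq_Some a z z'' : f (Some a) = None -> F (Some z) = Some z'' ->
  (z = a /\ z'' = c) \/ exists z', f (Some z) = Some z' /\ z' <> c /\ z'' = inversion c r z'.
Proof.
move=> fa; case/sphere_refl_eq_Some => [[fz ->]|]; last by right.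
by rewrite -fa in fz; left; have [->] := inverse_maps_inj fg fz.
Qed.

Lemma inversive_sphere_refl_center a l : is_inversive f a c l ->
  is_similarity F (r ^ 2 / l).
Proof.
move=> [l0 [fa [fb [Hb Hf]]]].
have image := comp_sphere_refl_eq_Some fa.
have pos z z' := @dist_pole_pos f a z z' fa.
split; first by rewrite /F fb sphere_refl_center.
split; first by apply: Rdiv_lt_0_compat => //; nra.
move=> z w z'' w''.
case/image => [[-> ->]|[z' [fz [z'c ->]]]]; case/image => [[-> ->]|[w' [fw [w'c ->]]]].
- by rewrite !dist_xx; ring.
- have ? := pos _ _ fw.
  by rewrite dist_sym dist_inversion_center // (Hb _ _ fw) (dist_sym a w); clear_denoms.
- have ? := pos _ _ fz.
  by rewrite dist_inversion_center // (Hb _ _ fz); clear_denoms.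
- have ? := pos _ _ fz; have ? := pos _ _ fw.
  rewrite dist_inversion // (Hf _ _ _ _ fz fw) (Hb _ _ fz) (Hb _ _ fw).
  clear_denoms.
Qed.

Lemma inversive_sphere_refl a b l z0 : is_inversive f a b l -> b <> c ->
  f (Some z0) = Some c ->
  is_inversive F z0 (inversion c r b) (r ^ 2 * dist z0 a ^ 2 / l).
Proof.
move=> [l0 [fa [fb [Hb Hf]]]] bc fz0.
have image := comp_sphere_refl_eq_Some fa.
have pos z z' := @dist_pole_pos f a z z' fa.
have dist_c z z' : f (Some z) = Some z' ->
    dist z' c = l * dist z z0 / (dist z a * dist z0 a).
  by move=> fz; apply: Hf fz fz0.
have pos0 z z' : f (Some z) = Some z' -> z' <> c -> 0 < dist z z0.
  move=> fz /dist_pos; rewrite (dist_c _ _ fz).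
  have ? := pos _ _ fz; have ? := pos _ _ fz0.
  by case: (dist_ge0 z z0) => // <-; rewrite /Rdiv !Rmult_0_r Rmult_0_l; lra.
have ? := pos _ _ fz0.
have bc0 : dist c b = l / dist z0 a by apply: Hb.
have ? : 0 < dist b c by apply: dist_pos.
split; first by apply: Rdiv_lt_0_compat => //; apply: Rmult_lt_0_compat; apply: pow_lt.
rewrite /F fz0 sphere_refl_center fb sphere_refl_Some //.
do 2! split => //.
split=> [z z''|z w z'' w''].
  case/image => [[-> ->]|[z' [fz [z'c ->]]]].
    by rewrite dist_sym dist_inversion_center // (dist_sym b c) bc0 (dist_sym a z0); clear_denoms.
  have ? := pos0 _ _ fz z'c; have ? := pos _ _ fz.
  by rewrite dist_inversion // (Hb _ _ fz) (dist_c _ _ fz) (dist_sym b c) bc0; clear_denoms.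
case/image => [[-> ->]|[z' [fz [z'c ->]]]]; case/image => [[-> ->]|[w' [fw [w'c ->]]]].
- by rewrite !dist_xx /Rdiv !Rmult_0_r !Rmult_0_l.
- have ? := pos0 _ _ fw w'c; have ? := pos _ _ fw.
  rewrite dist_sym dist_inversion_center // (dist_c _ _ fw) (dist_sym a w) (dist_sym a z0).
  clear_denoms.
- have ? := pos0 _ _ fz z'c; have ? := pos _ _ fz.
  rewrite dist_inversion_center // (dist_c _ _ fz) (dist_sym z a) (dist_sym a z0).
  clear_denoms.
- have ? := pos0 _ _ fz z'c; have ? := pos _ _ fz.
  have ? := pos0 _ _ fw w'c; have ? := pos _ _ fw.
  rewrite dist_inversion // (Hf _ _ _ _ fz fw) (dist_c _ _ fz) (dist_c _ _ fw).
  clear_denoms.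
Qed.

Lemma mobius_type_sphere_refl : mobius_type f -> mobius_type F.
Proof.
have [z0 fz0] : exists z0, f z0 = Some c by exists (g (Some c)); case: (fg (Some c)).
case=> [[l sim]|[a [b [l inv]]]].
- case: z0 fz0 => [z0|] fz0; last by case: sim => f0; rewrite f0 in fz0.
  by right; exists z0, c, (r ^ 2 / l); apply: similarity_sphere_refl.
- case: (excluded_middle_informative (b = c)) => [bc|bc].
    by left; exists (r ^ 2 / l); apply: (@inversive_sphere_refl_center a); rewrite -bc.
  case: z0 fz0 => [z0|] fz0; last first.
    by case: inv => _ [_ [fb _]]; case: bc; rewrite fb in fz0; case: fz0.
  by right; exists z0, (inversion c r b), (r ^ 2 * dist z0 a ^ 2 / l); apply: inversive_sphere_refl.
Qed.

End SphereReflection.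

Lemma mobius_normal_form f : is_mobius f -> exists g, inverse_maps f g /\ mobius_type f.
Proof.
elim=> [|{}f h _ [g [fg Hf]] [c r r0|u t u0]].
- exists id; split=> //; left; exists 1; do 2! split=> //; first lra.
  by move=> z w z' w' [<-] [<-]; ring.
- exists (fun z => g (sphere_refl c r z)); split; last exact: mobius_type_sphere_refl.
  by apply: inverse_maps_comp => // z; apply: sphere_reflK.
- exists (fun z => g (plane_refl u t z)); split; last exact: mobius_type_plane_refl.
  by apply: inverse_maps_comp => // z; apply: plane_reflK.
Qed.

Lemma mobius_type_inverse f g : inverse_maps f g -> mobius_type f -> mobius_type g.
Proof.
move=> fg [[l [f0 [l0 Hf]]]|[a [b [l [l0 [fa [fb [Hb Hf]]]]]]]].
- left; exists (/ l); split; first by case: (fg None) => e _; rewrite f0 in e.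
  split=> [|z w z' w' /(inverse_maps_Some (inverse_maps_sym fg)) fz
              /(inverse_maps_Some (inverse_maps_sym fg)) fw].
    exact: Rinv_0_lt_compat.
  by rewrite (Hf _ _ _ _ fz fw); field; lra.
- right; exists b, a, l; split=> //.
  split; first by rewrite -fb; case: (fg None).
  split; first by rewrite -fa; case: (fg (Some a)).
  have pos z z' := @dist_pole_pos f a z z' fa.
  have posb z z' : f (Some z) = Some z' -> 0 < dist z' b.
    by move=> fz; rewrite (Hb _ _ fz); apply: Rdiv_lt_0_compat => //; apply: pos fz.
  have back := inverse_maps_Some (inverse_maps_sym fg).
  split=> [z z' /back fz|z w z' w' /back fz /back fw].
    have ? := pos _ _ fz; have ? := posb _ _ fz.
    by rewrite (Hb _ _ fz); field; lra.
  have ? := pos _ _ fz; have ? := posb _ _ fz; have ? := pos _ _ fw; have ? := posb _ _ fw.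
  by rewrite (Hf _ _ _ _ fz fw) (Hb _ _ fz) (Hb _ _ fw); field; lra.
Qed.

End MobiusNormalForm.

Lemma Rsup_lub (E : R -> Prop) : bound E -> (exists s, E s) -> is_lub E (Rsup E).
Proof.
move=> Eb Ene; rewrite /Rsup; case: excluded_middle_informative => [?|[]] //.
by case: (completeness E _ _).
Qed.

(* [Rsup E = 0] when [E] is empty or unbounded, hence the sign condition. *)
Lemma Rsup_le (E : R -> Prop) K : (forall s, E s -> s <= K) -> 0 <= K -> Rsup E <= K.
Proof.
move=> EK K0; rewrite /Rsup; case: excluded_middle_informative => // ?.
by case: (completeness E _ _) => S [_ SK] /=; apply: SK.
Qed.

Lemma Rsup_ge0 (E : R -> Prop) : (forall s, E s -> 0 <= s) -> 0 <= Rsup E.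
Proof.
move=> E0; rewrite /Rsup; case: excluded_middle_informative => [[Eb [s Es]]|_]; last lra.
case: (completeness E _ _) => S [ES _] /=.
exact: Rle_trans (E0 _ Es) (ES _ Es).
Qed.

Lemma div_sqrt_le_div_sqrt t P P' : 0 <= t -> 0 < P -> P <= P' ->
  t / sqrt P' <= t / sqrt P.
Proof.
move=> t0 P0 PP'; apply: Rmult_le_compat_l => //.
by apply: Rinv_le_contravar; [apply: sqrt_lt_R0 | apply: sqrt_le_1_alt].
Qed.

Section Cassinian.
Variable n : nat.
Implicit Types x y z p q : pt n.

Definition cassinian_ratio x y p := dist x y / sqrt (dist x p * dist y p).

Definition cassinian_set (D : pt n -> Prop) x y :=
  fun s => exists p, boundary D p /\ s = cassinian_ratio x y p.

Lemma cassinian_ratio_ge0 x y p : 0 <= cassinian_ratio x y p.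
Proof.
apply: Rmult_le_pos; first exact: dist_ge0.
case: (sqrt_pos (dist x p * dist y p)) => [?|<-]; last by rewrite Rinv_0; lra.
by apply: Rlt_le; apply: Rinv_0_lt_compat.
Qed.

Lemma cassinian_ratioC x y p : cassinian_ratio x y p = cassinian_ratio y x p.
Proof. by rewrite /cassinian_ratio dist_sym Rmult_comm. Qed.

Lemma cassinian_setC D x y : cassinian_set D x y = cassinian_set D y x.
Proof.
apply: functional_extensionality => s; apply: propositional_extensionality.
by split=> -[p [Dp ->]]; exists p; rewrite cassinian_ratioC.
Qed.

Lemma cassinian_sup_ge0 D x y : 0 <= Rsup (cassinian_set D x y).
Proof. by apply: Rsup_ge0 => _ [p [_ ->]]; apply: cassinian_ratio_ge0. Qed.

Variable D : pt n -> Prop.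
Hypothesis openD : is_open D.

Lemma boundary_notin p : boundary D p -> ~ D p.
Proof.
move=> [_ Dc] Dp; have [e [e0 De]] := openD Dp.
by have [w [pw Dw]] := Dc e e0; apply: Dw; apply: De.
Qed.

Lemma notin_neq x p : D x -> ~ D p -> x <> p.
Proof. by move=> Dx Dp xp; apply: Dp; rewrite -xp. Qed.

Lemma dist_notin_ge x : D x -> exists e, 0 < e /\ forall q, ~ D q -> e <= dist x q.
Proof.
move=> Dx; have [e [e0 De]] := openD Dx; exists e; split=> // q Dq.
by apply: Rnot_lt_le => xq; apply: Dq; apply: De; rewrite /ball dist_sym.
Qed.

Lemma segment_boundary x q : D x -> ~ D q ->
  exists th, 0 < th <= 1 /\ boundary D (segment_point x q th).
Proof.
move=> Dx Dq; have qx := nesym (notin_neq Dx Dq); have qx0 := dist_pos qx.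
set E := fun th => 0 <= th <= 1 /\ forall s, 0 <= s <= th -> D (segment_point x q s).
have E0 : E 0.
  split=> [|s s0]; first lra.
  have -> : s = 0 by lra.
  by rewrite segment_point0.
have Eb : bound E by exists 1 => th [[]].
have [T [ET Tle]] := completeness E Eb (ex_intro _ 0 E0).
have T0 : 0 <= T by apply: ET.
have T1 : T <= 1 by apply: Tle => th [[]].
have inD s : 0 <= s < T -> D (segment_point x q s).
  move=> s0; apply: NNPP => Ds; suff : T <= s by lra.
  by apply: Tle => th [_ Eth]; apply: Rnot_lt_le => ths; apply: Ds; apply: Eth; lra.
have notT : ~ D (segment_point x q T).
  move=> DT; have {}T1 : T < 1.
    by case: T1 => // T1; case: Dq; rewrite -(segment_point1 x q) -T1.
  have [e [e0 De]] := openD DT.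
  have h0 : 0 < e / (2 * dist q x) by apply: Rdiv_lt_0_compat; lra.
  suff : Rmin 1 (T + e / (2 * dist q x)) <= T by rewrite /Rmin; case: Rle_dec; lra.
  apply: ET; split=> [|s s0]; first by rewrite /Rmin; case: Rle_dec; lra.
  case: (Rlt_le_dec s T) => sT; first by apply: inD; lra.
  apply: De; apply: dist_segment_point_lt => //.
  move: s0; rewrite Rabs_pos_eq /Rmin; [case: Rle_dec|]; lra.
have T0' : 0 < T by case: T0 => // T0; case: notT; rewrite -T0 segment_point0.
exists T; split; first lra.
split=> e e0; last by exists (segment_point x q T); rewrite /ball dist_xx.
have h0 : 0 < e / (2 * dist q x) by apply: Rdiv_lt_0_compat; lra.
set s := Rmax 0 (T - e / (2 * dist q x)).
have s0 : 0 <= s < T by rewrite /s /Rmax; case: Rle_dec; lra.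
exists (segment_point x q s); split; last exact: inD.
apply: dist_segment_point_lt => //.
rewrite Rabs_minus_sym Rabs_pos_eq /s /Rmax; case: Rle_dec; lra.
Qed.

Lemma cassinian_set_nonempty_bounded x y : D x -> D y -> is_proper D ->
  bound (cassinian_set D x y) /\ exists s, cassinian_set D x y s.
Proof.
move=> Dx Dy [q Dq]; split; last first.
  have [th [_ bd]] := segment_boundary Dx Dq.
  by eexists; exists (segment_point x q th).
have [ex [ex0 Hx]] := dist_notin_ge Dx; have [ey [ey0 Hy]] := dist_notin_ge Dy.
exists (dist x y / sqrt (ex * ey)) => _ [p [bp ->]].
have Dp := boundary_notin bp.
apply: div_sqrt_le_div_sqrt; [exact: dist_ge0 | nra |].
by apply: Rmult_le_compat; try lra; [apply: Hx | apply: Hy].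
Qed.

Lemma cassinian_ratio_le_sup x y p : D x -> D y -> is_proper D -> boundary D p ->
  cassinian_ratio x y p <= Rsup (cassinian_set D x y).
Proof.
move=> Dx Dy pD bp; have [Eb Ene] := cassinian_set_nonempty_bounded Dx Dy pD.
by case: (Rsup_lub Eb Ene) => + _; apply; exists p.
Qed.

Lemma segment_product_le th L M t : 0 < th <= 1 -> 0 <= L <= M -> 0 <= t <= 2 * M ->
  th * L * ((1 - th) * t + th * M) <= L * M.
Proof.
move=> th01 LM t2M.
have le_M : th * ((1 - th) * t + th * M) <= M.
  have ? : th * (1 - th) * t <= th * (1 - th) * (2 * M) by apply: Rmult_le_compat_l; nra.
  have ? : 0 <= (1 - th) ^ 2 * M by apply: Rmult_le_pos; nra.
  lra.
have := Rmult_le_compat_l _ _ _ (proj1 LM) le_M; lra.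
Qed.

(* Walking from [x] towards [q] we leave [D] at a boundary point [c] that is
   no farther from [x] and [y] in the product sense. *)
Lemma cassinian_ratio_notin_le_sup_near x y q : D x -> D y -> is_proper D -> ~ D q ->
  dist x q <= dist y q -> cassinian_ratio x y q <= Rsup (cassinian_set D x y).
Proof.
move=> Dx Dy pD Dq xqy.
have [th [th01 bc]] := segment_boundary Dx Dq.
set c := segment_point x q th in bc *.
have Dc := boundary_notin bc.
have xc := dist_pos (notin_neq Dx Dc); have yc := dist_pos (notin_neq Dy Dc).
apply: Rle_trans (cassinian_ratio_le_sup Dx Dy pD bc).
apply: div_sqrt_le_div_sqrt; [exact: dist_ge0 | exact: Rmult_lt_0_compat |].
have xc_eq : dist x c = th * dist x q.
  rewrite /c -{1}(segment_point0 x q) dist_segment_point (dist_sym q x).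
  by rewrite Rabs_minus_sym Rminus_0_r Rabs_pos_eq //; lra.
have yc_le := dist_segment_point_le x q y (conj (Rlt_le _ _ (proj1 th01)) (proj2 th01)).
have xy2 : dist x y <= 2 * dist y q.
  by have := dist_triangle x q y; rewrite (dist_sym q y); lra.
rewrite xc_eq.
apply: Rle_trans (segment_product_le th01 (conj (dist_ge0 x q) xqy) (conj (dist_ge0 x y) xy2)).
apply: Rmult_le_compat_l; first by apply: Rmult_le_pos; [lra | apply: dist_ge0].
by rewrite (dist_sym y x) in yc_le.
Qed.

Lemma cassinian_ratio_notin_le_sup x y q : D x -> D y -> is_proper D -> ~ D q ->
  cassinian_ratio x y q <= Rsup (cassinian_set D x y).
Proof.
move=> Dx Dy pD Dq.
case: (Rle_lt_dec (dist x q) (dist y q)) => xqy.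
  exact: cassinian_ratio_notin_le_sup_near.
rewrite cassinian_ratioC cassinian_setC.
by apply: cassinian_ratio_notin_le_sup_near => //; lra.
Qed.

End Cassinian.

Lemma div_sqrt_le_iff u N K : 0 <= u -> 0 < N -> 0 <= K ->
  u / sqrt N <= K <-> u ^ 2 <= K ^ 2 * N.
Proof.
move=> u0 N0 K0; have sN := sqrt_lt_R0 _ N0.
have -> : K ^ 2 * N = (K * sqrt N) ^ 2 by rewrite -{1}(sqrt_sqrt _ (Rlt_le _ _ N0)); ring.
have KsN : 0 <= K * sqrt N by apply: Rmult_le_pos; lra.
have -> : (u / sqrt N <= K) <-> u <= K * sqrt N.
  split=> [uK|uK].
  - have := Rmult_le_compat_r _ _ _ (Rlt_le _ _ sN) uK.
    by have -> : u / sqrt N * sqrt N = u by field; lra.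
  - have := Rmult_le_compat_r _ _ _ (Rlt_le _ _ (Rinv_0_lt_compat _ sN)) uK.
    by have -> : K * sqrt N * / sqrt N = K by field; lra.
split=> uK; nra.
Qed.

Lemma div_sqrt_eq u v B B' : 0 <= u -> 0 <= v -> 0 < B -> 0 < B' ->
  u ^ 2 * B' = v ^ 2 * B -> u / sqrt B = v / sqrt B'.
Proof.
move=> u0 v0 B0 B'0 uv.
have ? := sqrt_lt_R0 _ B0; have ? := sqrt_lt_R0 _ B'0.
apply: nonneg_sq_inj; try by apply: Rmult_le_pos => //; apply: Rlt_le; apply: Rinv_0_lt_compat.
rewrite /Rdiv !Rpow_mult_distr !pow_inv !pow2_sqrt; try lra.
have -> : u ^ 2 * / B = u ^ 2 * B' / (B * B') by field; lra.
by rewrite uv; field; lra.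
Qed.

Lemma div_le_of_le_mul a b c : 0 < b -> a <= c * b -> a / b <= c.
Proof.
move=> b0 ab; apply: (Rmult_le_reg_r b) => //.
by have -> : a / b * b = a by field; lra.
Qed.

Lemma ratio_sq_le t A B S : 0 <= t -> 0 < A -> 0 < B ->
  t ^ 2 <= S ^ 2 * (A * B) -> B <= A + t -> (t / A) ^ 2 <= S ^ 2 * (1 + t / A).
Proof.
move=> t0 A0 B0 tS BA.
have -> : (t / A) ^ 2 = t ^ 2 / A ^ 2 by field; lra.
have -> : S ^ 2 * (1 + t / A) = S ^ 2 * (A * (A + t)) / A ^ 2 by field; lra.
apply: Rmult_le_compat_r; first by apply: Rlt_le; apply: Rinv_0_lt_compat; nra.
apply: Rle_trans tS _; apply: Rmult_le_compat_l; first nra.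
by apply: Rmult_le_compat_l; lra.
Qed.

Lemma quadratic_root S : exists r, r ^ 2 = S ^ 2 * (1 + r) /\ S ^ 2 <= r.
Proof.
have D0 : 0 <= S ^ 4 + 4 * S ^ 2 by nra.
have ? := sqrt_sqrt _ D0; have ? := sqrt_pos (S ^ 4 + 4 * S ^ 2).
have ? : S ^ 2 <= sqrt (S ^ 4 + 4 * S ^ 2).
  by apply: Rsqr_incr_0_var; rewrite /Rsqr; nra.
by exists ((S ^ 2 + sqrt (S ^ 4 + 4 * S ^ 2)) / 2); split; nra.
Qed.

Lemma le_quadratic_root S r a : r ^ 2 = S ^ 2 * (1 + r) -> S ^ 2 <= r ->
  0 <= a -> a ^ 2 <= S ^ 2 * (1 + a) -> a <= r.
Proof.
move=> rS Sr a0 aS; apply: Rnot_lt_le => ra.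
have : (a - r) * (a + r) > (a - r) * S ^ 2 by apply: Rmult_lt_compat_l; nra.
nra.
Qed.

Lemma add_le_of_mul_le x y K P : 0 < K -> x <= K -> y <= K -> x * y <= P ->
  x + y <= K + P / K.
Proof.
move=> K0 xK yK xyP.
have e : K * (K + P / K) = K * K + P by field; lra.
by apply: (Rmult_le_reg_l K) => //; rewrite e; nra.
Qed.

(* Here [al], [ga] are [t/A1], [t/A2] and [de], [be] are [t/P1], [t/P2]. *)
Lemma cross_sum_le S al be ga de : 0 <= S -> 0 < al -> 0 < be -> 0 < ga -> 0 < de ->
  al ^ 2 <= S ^ 2 * (1 + al) -> be ^ 2 <= S ^ 2 * (1 + be) ->
  ga ^ 2 <= S ^ 2 * (1 + ga) -> de ^ 2 <= S ^ 2 * (1 + de) ->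
  al * ga <= S ^ 2 -> de * be <= S ^ 2 ->
  (al + de) * (be + ga) <= (2 * S + S ^ 2) ^ 2.
Proof.
move=> S0 al0 be0 ga0 de0 alS beS gaS deS alga debe.
have [r [rS Sr]] := quadratic_root S.
have alr := le_quadratic_root rS Sr (Rlt_le _ _ al0) alS.
have ber := le_quadratic_root rS Sr (Rlt_le _ _ be0) beS.
have gar := le_quadratic_root rS Sr (Rlt_le _ _ ga0) gaS.
have der := le_quadratic_root rS Sr (Rlt_le _ _ de0) deS.
have S0' : 0 < S by case: S0 => // S0; rewrite -S0 in alga; nra.
have r0 : 0 < r ^ 2 by nra.
(* The two other products are at most [r^2] and multiply to at most [S^4]. *)
have : al * be + de * ga <= r ^ 2 + S ^ 4 / r ^ 2.
  apply: add_le_of_mul_le => //; try nra.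
  have -> : al * be * (de * ga) = (al * ga) * (de * be) by ring.
  apply: Rle_trans (Rmult_le_compat _ _ _ _ _ _ alga debe) _; nra.
have -> : r ^ 2 + S ^ 4 / r ^ 2 = 2 * S ^ 2 + S ^ 4.
  apply: (Rmult_eq_reg_r (r ^ 2)); last lra.
  have -> : (r ^ 2 + S ^ 4 / r ^ 2) * r ^ 2 = r ^ 2 * r ^ 2 + S ^ 4 by field; lra.
  have ? : S ^ 4 * r ^ 2 = S ^ 4 * (S ^ 2 * (1 + r)) by rewrite rS.
  rewrite rS; lra.
have ? : 0 <= S ^ 3 by apply: pow_le; lra.
nra.
Qed.

Lemma inversive_ratio_le S t A1 A2 P1 P2 d : 0 <= S -> 0 <= t ->
  0 < A1 -> 0 < A2 -> 0 < P1 -> 0 < P2 -> 0 <= d ->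
  t / sqrt (A1 * A2) <= S -> t / sqrt (P1 * P2) <= S ->
  A2 <= A1 + t -> A1 <= A2 + t -> P2 <= P1 + t -> P1 <= P2 + t ->
  d <= A1 + P1 -> d <= A2 + P2 ->
  t * d / sqrt (A1 * A2 * (P1 * P2)) <= 2 * S + S ^ 2.
Proof.
move=> S0 t0 A10 A20 P10 P20 d0 AS PS A21 A12 P21 P12 d1 d2.
have S2 : 0 <= 2 * S + S ^ 2 by nra.
have N0 : 0 < A1 * A2 * (P1 * P2) by repeat apply: Rmult_lt_0_compat.
case: t0 => [t0|<-]; last by rewrite Rmult_0_l /Rdiv Rmult_0_l.
move/div_sqrt_le_iff: AS => /(_ (Rlt_le _ _ t0) (Rmult_lt_0_compat _ _ A10 A20) S0) AS.
move/div_sqrt_le_iff: PS => /(_ (Rlt_le _ _ t0) (Rmult_lt_0_compat _ _ P10 P20) S0) PS.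
apply/div_sqrt_le_iff => //; first by apply: Rmult_le_pos; lra.
have AS' : t ^ 2 <= S ^ 2 * (A2 * A1) by rewrite (Rmult_comm A2).
have PS' : t ^ 2 <= S ^ 2 * (P2 * P1) by rewrite (Rmult_comm P2).
have ratio0 u : 0 < u -> 0 < t / u by move=> ?; apply: Rdiv_lt_0_compat.
have alga : t / A1 * (t / A2) <= S ^ 2.
  have -> : t / A1 * (t / A2) = t ^ 2 / (A1 * A2) by field; lra.
  exact: div_le_of_le_mul (Rmult_lt_0_compat _ _ A10 A20) AS.
have debe : t / P1 * (t / P2) <= S ^ 2.
  have -> : t / P1 * (t / P2) = t ^ 2 / (P1 * P2) by field; lra.
  exact: div_le_of_le_mul (Rmult_lt_0_compat _ _ P10 P20) PS.
have := cross_sum_le S0 (ratio0 _ A10) (ratio0 _ P20) (ratio0 _ A20) (ratio0 _ P10)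
  (ratio_sq_le (Rlt_le _ _ t0) A10 A20 AS A21)
  (ratio_sq_le (Rlt_le _ _ t0) P20 P10 PS' P12)
  (ratio_sq_le (Rlt_le _ _ t0) A20 A10 AS' A12)
  (ratio_sq_le (Rlt_le _ _ t0) P10 P20 PS P21) alga debe.
move=> /(Rmult_le_compat_r _ _ _ (Rlt_le _ _ N0)).
have -> : (t / A1 + t / P1) * (t / P2 + t / A2) * (A1 * A2 * (P1 * P2))
    = t ^ 2 * ((A1 + P1) * (A2 + P2)) by field; lra.
have ? : t ^ 2 * d ^ 2 <= t ^ 2 * ((A1 + P1) * (A2 + P2)) by apply: Rmult_le_compat_l; nra.
move=> ?; nra.
Qed.

Definition maps_onto n (f : ext n -> ext n) (D D' : pt n -> Prop) :=
  forall z : ext n, (exists x, D x /\ f (Some x) = z) <-> (exists y, D' y /\ z = Some y).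

Section MobiusImage.
Variable n : nat.
Implicit Types x y z p q : pt n.
Variable f : ext n -> ext n.

Lemma similarity_cassinian_ratio l x y p fx fy fp : is_similarity f l ->
  f (Some x) = Some fx -> f (Some y) = Some fy -> f (Some p) = Some fp ->
  x <> p -> y <> p -> cassinian_ratio fx fy fp = cassinian_ratio x y p.
Proof.
move=> [_ [l0 Hf]] fx_ fy_ fp_ /dist_pos xp /dist_pos yp.
rewrite /cassinian_ratio (Hf _ _ _ _ fx_ fy_) (Hf _ _ _ _ fx_ fp_) (Hf _ _ _ _ fy_ fp_).
have ? := dist_ge0 x y.
apply: div_sqrt_eq; last ring; try by repeat apply: Rmult_lt_0_compat.
by apply: Rmult_le_pos; lra.
Qed.

Lemma inversive_cassinian_ratio_pole a b l x y fx fy : is_inversive f a b l ->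
  f (Some x) = Some fx -> f (Some y) = Some fy ->
  cassinian_ratio fx fy b = cassinian_ratio x y a.
Proof.
move=> [l0 [fa [_ [Hb Hf]]]] fx_ fy_.
have ? := dist_pole_pos fa fx_; have ? := dist_pole_pos fa fy_.
have ? := dist_ge0 x y.
rewrite /cassinian_ratio (Hf _ _ _ _ fx_ fy_) (Hb _ _ fx_) (Hb _ _ fy_).
apply: div_sqrt_eq; try nra.
- by apply: Rmult_le_pos; [nra | apply: Rlt_le; apply: Rinv_0_lt_compat; nra].
- by apply: Rmult_lt_0_compat; apply: Rdiv_lt_0_compat.
- by field; lra.
Qed.

Lemma inversive_cassinian_ratio a b l x y p fx fy fp : is_inversive f a b l ->
  f (Some x) = Some fx -> f (Some y) = Some fy -> f (Some p) = Some fp ->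
  x <> p -> y <> p ->
  cassinian_ratio fx fy fp =
  dist x y * dist p a / sqrt (dist x a * dist y a * (dist x p * dist y p)).
Proof.
move=> [l0 [fa [_ [_ Hf]]]] fx_ fy_ fp_ /dist_pos xp /dist_pos yp.
have ? := dist_pole_pos fa fx_; have ? := dist_pole_pos fa fy_.
have ? := dist_pole_pos fa fp_; have ? := dist_ge0 x y.
rewrite /cassinian_ratio (Hf _ _ _ _ fx_ fy_) (Hf _ _ _ _ fx_ fp_) (Hf _ _ _ _ fy_ fp_).
apply: div_sqrt_eq.
- by apply: Rmult_le_pos; [nra | apply: Rlt_le; apply: Rinv_0_lt_compat; nra].
- by apply: Rmult_le_pos; lra.
- by apply: Rmult_lt_0_compat; apply: Rdiv_lt_0_compat; nra.
- by repeat apply: Rmult_lt_0_compat.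
- by field; lra.
Qed.

Variables (g : ext n -> ext n) (D D' : pt n -> Prop).
Hypotheses (fg : inverse_maps f g) (fD : maps_onto f D D').

Lemma maps_onto_image x : D x -> exists y, f (Some x) = Some y /\ D' y.
Proof.
move=> Dx; case: (proj1 (fD (f (Some x)))); first by exists x.
by move=> y [D'y ->]; exists y.
Qed.

Lemma maps_onto_mem x fx : D x -> f (Some x) = Some fx -> D' fx.
Proof. by move=> /maps_onto_image [y [-> D'y]] [<-]. Qed.

Lemma maps_onto_preimage y : D' y -> exists x, D x /\ f (Some x) = Some y.
Proof. by move=> D'y; apply: (proj2 (fD (Some y))); exists y. Qed.

Lemma maps_onto_inverse : maps_onto g D' D.
Proof.
move=> z; split=> [[y [D'y <-]]|[x [Dx ->]]].
- have [x [Dx fx_]] := maps_onto_preimage D'y.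
  by exists x; split=> //; apply: inverse_maps_Some fx_.
- have [y [fx_ D'y]] := maps_onto_image Dx.
  by exists y; split=> //; apply: inverse_maps_Some fx_.
Qed.

Lemma boundary_preimage p q d K : f (Some p) = Some q -> 0 < d -> 0 < K ->
  (forall w w', dist w' q < d -> f (Some w) = Some w' -> dist w p <= K * dist w' q) ->
  (forall w', dist w' q < d -> exists w, f (Some w) = Some w') ->
  boundary D' q -> boundary D p.
Proof.
move=> fp d0 K0 Lip onto [inD' outD'].
have near e : 0 < e -> exists d', 0 < d' /\ d' <= d /\
    forall w w', dist w' q < d' -> f (Some w) = Some w' -> dist w p < e.
  move=> e0; exists (Rmin d (e / K)).
  split; first by apply: Rmin_pos => //; apply: Rdiv_lt_0_compat.
  split=> [|w w' w'q fw]; first exact: Rmin_l.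
  apply: Rle_lt_trans (Lip _ _ (Rlt_le_trans _ _ _ w'q (Rmin_l _ _)) fw) _.
  have := Rmult_lt_compat_l _ _ _ K0 (Rlt_le_trans _ _ _ w'q (Rmin_r _ _)).
  by have -> : K * (e / K) = e by field; lra.
split=> e e0; have [d' [d'0 [d'd Hd']]] := near e e0.
- have [w' [w'q D'w']] := inD' d' d'0; have [w [Dw fw]] := maps_onto_preimage D'w'.
  by exists w; split=> //; apply: Hd' fw.
- have [w' [w'q D'w']] := outD' d' d'0.
  have [w fw] := onto w' (Rlt_le_trans _ _ _ w'q d'd).
  exists w; split; first exact: Hd' fw.
  by move=> /maps_onto_image [w'' [fw' D'w'']]; apply: D'w'; rewrite fw in fw'; case: fw' => ->.
Qed.

Lemma similarity_boundary_preimage l q : is_similarity f l -> boundary D' q ->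
  exists p, f (Some p) = Some q /\ boundary D p.
Proof.
move=> [f0 [l0 Hf]] bq.
have onto w' : exists w, f (Some w) = Some w'.
  case gw: (g (Some w')) => [w|].
    by exists w; apply: (inverse_maps_Some (inverse_maps_sym fg)).
  by have [_] := fg (Some w'); rewrite gw f0.
have [p fp] := onto q; exists p; split=> //.
apply: (boundary_preimage fp (d := 1) (K := / l)) => //; try lra.
- by apply: Rinv_0_lt_compat.
- by move=> w w' _ fw; rewrite (Hf _ _ _ _ fw fp); apply: Req_le; field; lra.
Qed.

Lemma inversive_boundary_preimage a b l q : is_inversive f a b l -> q <> b ->
  boundary D' q -> exists p, f (Some p) = Some q /\ boundary D p.
Proof.
move=> [l0 [fa [fb [Hb Hf]]]] qb bq.
have onto w' : w' <> b -> exists w, f (Some w) = Some w'.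
  case gw: (g (Some w')) => [w|] w'b.
    by exists w; apply: (inverse_maps_Some (inverse_maps_sym fg)).
  by have [_] := fg (Some w'); rewrite gw fb => -[bw]; case: w'b.
have [p fp] := onto q qb; exists p; split=> //.
have pa := dist_pole_pos fa fp; have qb0 := dist_pos qb.
have far w' : dist w' q < dist q b / 2 -> dist q b / 2 < dist w' b.
  by have := dist_triangle q w' b; rewrite (dist_sym q w'); lra.
apply: (boundary_preimage fp (d := dist q b / 2) (K := 2 * dist p a / dist q b)) => //.
- lra.
- by apply: Rdiv_lt_0_compat; lra.
- move=> w w' /far w'b fw; have wa := dist_pole_pos fa fw.
  (* The inversion formulas give [|w - p| / |p - a| = |w' - q| / |w' - b|]. *)
  have -> : dist w p = dist w' q * dist p a / dist w' b.
    by rewrite (Hf _ _ _ _ fw fp) (Hb _ _ fw); field; repeat split; lra.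
  have ? := dist_ge0 w' q.
  apply: (Rle_trans _ (dist w' q * dist p a / (dist q b / 2))); last by apply: Req_le; field; lra.
  apply: Rmult_le_compat_l; first nra.
  by apply: Rinv_le_contravar; lra.
- move=> w' /far w'b; apply: onto => w'b'; rewrite w'b' dist_xx in w'b; lra.
Qed.

End MobiusImage.

Lemma ln_one_plus_le_twice S S' : 0 <= S -> 0 <= S' -> S' <= 2 * S + S ^ 2 ->
  ln (1 + S') <= 2 * ln (1 + S).
Proof.
move=> S0 S'0 S'S.
have -> : 2 * ln (1 + S) = ln ((1 + S) * (1 + S)) by rewrite ln_mult; lra.
case: (Rle_lt_or_eq_dec (1 + S') ((1 + S) * (1 + S))); first nra.
  by move=> lt; apply: Rlt_le; apply: ln_increasing => //; lra.
by move=> ->; apply: Rle_refl.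
Qed.

Section TauTildeImage.
Variable n : nat.
Variables (f g : ext n -> ext n) (D D' : pt n -> Prop).
Hypotheses (openD : is_open D) (properD : is_proper D).
Hypotheses (fg : inverse_maps f g) (mf : mobius_type f) (fD : maps_onto f D D').

Lemma cassinian_sup_image_le x y fx fy : D x -> D y ->
  f (Some x) = Some fx -> f (Some y) = Some fy ->
  Rsup (cassinian_set D' fx fy) <=
  2 * Rsup (cassinian_set D x y) + Rsup (cassinian_set D x y) ^ 2.
Proof.
move=> Dx Dy fx_ fy_.
have S0 := cassinian_sup_ge0 D x y.
set S := Rsup _ in S0 *.
apply: Rsup_le; last nra.
move=> _ [q [bq ->]].
have ratio_le p : ~ D p -> cassinian_ratio x y p <= S.
  exact: cassinian_ratio_notin_le_sup.
have neq p : ~ D p -> x <> p /\ y <> p.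
  by move=> Dp; split; [exact: notin_neq Dx Dp | exact: notin_neq Dy Dp].
case: mf => [[l sim]|[a [b [l inv]]]].
- have [p [fp bp]] := similarity_boundary_preimage fg fD sim bq.
  have Dp := boundary_notin openD bp; have [xp yp] := neq _ Dp.
  by rewrite (similarity_cassinian_ratio sim fx_ fy_ fp xp yp); have := ratio_le _ Dp; nra.
have Da : ~ D a by move=> /(maps_onto_image fD) [? [fa _]]; case: inv => _ [+ _]; rewrite fa.
case: (excluded_middle_informative (q = b)) => [->|qb].
  by rewrite (inversive_cassinian_ratio_pole inv fx_ fy_); have := ratio_le _ Da; nra.
have [p [fp bp]] := inversive_boundary_preimage fg fD inv qb bq.
have Dp := boundary_notin openD bp; have [xp yp] := neq _ Dp; have [xa ya] := neq _ Da.
rewrite (inversive_cassinian_ratio inv fx_ fy_ fp xp yp).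
have ? := dist_pos xa; have ? := dist_pos ya; have ? := dist_pos xp; have ? := dist_pos yp.
have ? := dist_ge0 x y; have ? := dist_ge0 p a.
have ? := dist_triangle y x a; have ? := dist_triangle x y a; have ? := dist_triangle p x a.
have ? := dist_triangle y x p; have ? := dist_triangle x y p; have ? := dist_triangle p y a.
have ? := dist_sym y x; have ? := dist_sym p x; have ? := dist_sym p y.
by apply: inversive_ratio_le; try lra; apply: ratio_le.
Qed.

Lemma tau_tilde_image_le x y fx fy : D x -> D y ->
  f (Some x) = Some fx -> f (Some y) = Some fy ->
  tau_tilde D' fx fy <= 2 * tau_tilde D x y.
Proof.
move=> Dx Dy fx_ fy_; apply: ln_one_plus_le_twice.
- exact: cassinian_sup_ge0.
- exact: cassinian_sup_ge0.
- exact: cassinian_sup_image_le.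
Qed.

End TauTildeImage.

Theorem theorem5p2 (n : nat) (hn : (2 <= n)%coq_nat)
  (D D' : pt n -> Prop) (f : ext n -> ext n) :
  is_domain D -> is_proper D -> is_domain D' -> is_proper D' ->
  is_mobius f ->
  (forall z : ext n, (exists x, D x /\ f (Some x) = z) <-> (exists y, D' y /\ z = Some y)) ->
  forall x y fx fy : pt n, D x -> D y ->
    f (Some x) = Some fx -> f (Some y) = Some fy ->
    / 2 * tau_tilde D x y <= tau_tilde D' fx fy /\
    tau_tilde D' fx fy <= 2 * tau_tilde D x y.
Proof.
move=> [_ [openD _]] properD [_ [openD' _]] properD' mf fD x y fx fy Dx Dy fx_ fy_.
have {}fD : maps_onto f D D' := fD.
have [g [fg mtf]] := mobius_normal_form mf.
split; last exact: (tau_tilde_image_le openD properD fg mtf fD Dx Dy fx_ fy_).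
have := tau_tilde_image_le openD' properD' (inverse_maps_sym fg) (mobius_type_inverse fg mtf)
  (maps_onto_inverse fg fD) (maps_onto_mem fD Dx fx_) (maps_onto_mem fD Dy fy_)
  (inverse_maps_Some fg fx_) (inverse_maps_Some fg fy_).
lra.
Qed.
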